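(* For every even $n\ge2$, every integer $r\ge0$, every $p\in(0,1)$ and every graph $G$ of order $n$, $$\mathcal A_r(G)\le (4n)^{3n/2-1}\,p^{\frac{r}{4n}}\,N^{-d(G)}.$$
   Context: Fix $p\in(0,1)$ and $N:=1/(1-p)$. Trees. A 2-rooted ternary tree of order $n$ is a finite plane tree $U$ with a root vertex of degree 2 and $n$ true vertices of degree 4; each edge is internal or a leaf (half-edge). Each true vertex $v$ has parent edge $e_1(v)$ (towards the root) and ordered children edges $e_2(v),e_3(v),e_4(v)$. One root edge has type $\alpha$, the other $\bar\alpha$; if $e_1(v)$ has type $\tau$ then $e_2(v)$ has the other type and $e_3(v),e_4(v)$ have type $\tau$. Leaves of type $\alpha$ are leaves, of type $\bar\alpha$ anti-leaves ($n+1$ each). A heap-ordering labels true vertices bijectively by $\{1,\dots,n\}$, increasing from parent to child. Graphs. For even $n$, a graph of order $n$ is $G=(U,w,w')$: $U$ heap-ordered; $w$ a bijection leaves $\to$ anti-leaves (dashed edges; internal edges are solid); $w'$ a partition of true vertices into $n/2$ pairs (wavy edges) with, for each pair $\{v,v'\}$ ($v$ of smaller label), one of eight propagators in $(S,j,k)=(S_v,j_v,k_v)$, $(S',j',k')=(S_{v'},j_{v'},k_{v'})$: $\delta_{jj'}\delta_{kk'}$, $\delta_{j,S-j'}\delta_{kk'}$, $\delta_{jj'}\delta_{k,S-k'}$, $\delta_{j,S-j'}\delta_{k,S-k'}$, $\delta_{jk'}\delta_{kj'}$, $\delta_{j,S-k'}\delta_{kj'}$, $\delta_{jk'}\delta_{k,S-j'}$,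 $\delta_{j,S-k'}\delta_{k,S-j'}$, together with $S=S'$. Amplitude. A momentum attribution gives each true vertex $S_v\ge0$, $0\le j_v,k_v\le S_v$ and momenta $j_v,S_v-j_v,k_v,S_v-k_v$ to the ends at $v$ of $e_1,\dots,e_4$. For $r\in\mathbb N$ it is admissible if solid edges get equal momenta at both ends, both root edges carry momentum $r$, every dashed edge $e$ joins leaves of equal momentum $m(e)$, and every wavy edge satisfies $S_v=S_{v'}$ and its propagator. $\mathcal A_r(G):=N^{-n}\sum_{\text{admissible}}\prod_{e\text{ dashed}}p^{m(e)}$. Faces and degree. Call the edge-ends at true vertices and at the root slots. Each propagator of a wavy edge $\{v,v'\}$, with $S=S'$, identifies each of $j,S-j,k,S-k$ of $v$ with one momentum of $v'$, hence pairs each slot of $v$ with a slot of $v'$; these four pairs are the corners of that wavy edge. Let $\Gamma$ be the graph on the slots whose edges are the solid and dashed edges of $G$, the corners, and one extra edge joining the two root slots; its connected components (cycles) are the faces, $F(G)$ their number. Let $E$ be the $(n/2)\times F(G)$ matrix with rows indexed by wavy edges $\omega=\{v,v'\}$ ($v$ of smaller label), columns by faces, $E_{\omega f}$ = (number of corners of $\omega$ in $f$ containing $e_1(v)$ or $e_2(v)$) minus (number of corners of $\omega$ in $f$ containing $e_3(v)$ or $e_4(v)$). $R(G)=\operatorname{rank}E$, and $d(G):=n-F(G)+R(G)+1$. *)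

From HB Require Import structures.
From mathcomp Require Import all_boot all_order all_algebra.
From mathcomp Require Import classical_sets reals constructive_ereal ereal esum exp.
Set Implicit Arguments. Unset Strict Implicit. Unset Printing Implicit Defensive.
Import Order.TTheory GRing.Theory Num.Theory.

(* Slots (edge-ends).  A true vertex is a label v : 'I_n (heap labels   *)
(* 1..n are represented by 0..n-1).  Slots are:                         *)
(*   Rt b     : end of a root edge at the root; b = true  <-> type alpha, *)
(*                                              b = false <-> anti-alpha. *)
(*   At v i   : end at the true vertex v of the edge e_{i+1}(v),        *)
(*              i : 'I_4  (i = 0 : parent edge e_1, i = 1,2,3 : e_2,e_3,e_4). *)
Definition slot (n : nat) : finType := (bool + ('I_n * 'I_4))%type.
Definition Rt {n} (b : bool) : slot n := inl b.
Definition At {n} (v : 'I_n) (i : 'I_4) : slot n := inr (v, i).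

(* A graph of order n.
   - par v     : the slot to which the parent edge e_1(v) is attached
                 (a root slot, or a child slot At u i with i >= 1); this
                 encodes the heap-ordered 2-rooted ternary plane tree.
   - tau v     : the type of e_1(v) (true = alpha); it is determined by
                 the tree and constrained in [graph_wf].
   - dsh       : the map w from leaves to anti-leaves (dashed edges).
   - mate      : the pairing w' of true vertices (wavy edges).
   - prop v    : for v the smaller label of its pair, the index (0..7)
                 of the propagator of the wavy edge {v, mate v}, in the
                 order in which the eight propagators are listed.       *)
Record graph (n : nat) := Graph {
  par  : 'I_n -> slot n;
  tau  : 'I_n -> bool;
  dsh  : slot n -> slot n;
  mate : 'I_n -> 'I_n;
  prop : 'I_n -> 'I_8 }.

Section Graphs.
Variables (n : nat) (G : graph n).

Definition slot_type (s : slot n) : bool :=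
  match s with
  | inl b => b
  | inr (v, i) => if val i == 1%N then ~~ tau G v else tau G v
  end.

Definition hang_slot (s : slot n) : bool :=
  match s with inl _ => true | inr (_, i) => val i != 0%N end.

(* leaves: edges e_2..e_4 / root edges to which no true vertex is attached;
   a leaf is identified with its unique end *)
Definition is_halfedge (s : slot n) : bool :=
  hang_slot s && [forall v, par G v != s].
Definition is_leaf (s : slot n) : bool := is_halfedge s && slot_type s.
Definition is_antileaf (s : slot n) : bool := is_halfedge s && ~~ slot_type s.

Definition graph_wf : Prop :=
  (forall v, hang_slot (par G v)) /\
  (forall (v u : 'I_n) i, par G v = At u i -> (u < v)%N) /\
  (forall v v', par G v = par G v' -> v = v') /\
  (forall v, tau G v = slot_type (par G v)) /\
  (forall s, is_leaf s -> is_antileaf (dsh G s)) /\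
  (forall s s', is_leaf s -> is_leaf s' -> dsh G s = dsh G s' -> s = s') /\
  (forall t, is_antileaf t -> exists2 s, is_leaf s & dsh G s = t) /\
  (forall v, mate G v != v) /\
  (forall v, mate G (mate G v) = v).

Definition attribution := {ffun 'I_n -> nat * nat * nat}.
Definition aS (a : attribution) v := (a v).1.1.
Definition aj (a : attribution) v := (a v).1.2.
Definition ak (a : attribution) v := (a v).2.

Definition mom (r : nat) (a : attribution) (s : slot n) : nat :=
  match s with
  | inl _ => r
  | inr (v, i) =>
      match val i with
      | 0 => aj a v
      | 1 => aS a v - aj a v
      | 2 => ak a v
      | _ => aS a v - ak a v
      end
  end.

Definition prop_ok (c : 'I_8) (S j k j' k' : nat) : bool :=
  match val c with
  | 0 => (j == j') && (k == k')
  | 1 => (j == S - j') && (k == k')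
  | 2 => (j == j') && (k == S - k')
  | 3 => (j == S - j') && (k == S - k')
  | 4 => (j == k') && (k == j')
  | 5 => (j == S - k') && (k == j')
  | 6 => (j == k') && (k == S - j')
  | _ => (j == S - k') && (k == S - j')
  end.

Definition admissible (r : nat) (a : attribution) : Prop :=
  (forall v : 'I_n, aj a v <= aS a v /\ ak a v <= aS a v)%N /\
  (forall v, mom r a (At v ord0) = mom r a (par G v)) /\
  (forall s, is_leaf s -> mom r a s = mom r a (dsh G s)) /\
  (forall v : 'I_n, (v < mate G v)%N ->
     aS a v = aS a (mate G v) /\
     prop_ok (prop G v) (aS a v) (aj a v) (ak a v)
             (aj a (mate G v)) (ak a (mate G v))).

Variable R : realType.

Definition Nof (p : R) : R := (1 - p)^-1.

Definition amplitude (p : R) (r : nat) : \bar R :=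
  (((Nof p) ^- n)%:E *
   esum [set a : attribution | admissible r a]
      (fun a => (\prod_(s : slot n | is_leaf s) p ^+ mom r a s)%:E))%E.

(* index (0..3, standing for j, S-j, k, S-k / e_1..e_4) of the momentum of
   v' identified by propagator c with the momentum of index i of v *)
Definition corner_idx (c : 'I_8) (i : 'I_4) : 'I_4 :=
  inord (nth 0%N (nth [::] [:: [:: 0; 1; 2; 3]; [:: 1; 0; 2; 3];
                               [:: 0; 1; 3; 2]; [:: 1; 0; 3; 2];
                               [:: 2; 3; 0; 1]; [:: 3; 2; 0; 1];
                               [:: 2; 3; 1; 0]; [:: 3; 2; 1; 0]]%N (val c))
                 (val i)).

Definition gam0 (s t : slot n) : bool :=
  [exists v : 'I_n, (s == At v ord0) && (t == par G v)] ||
  (is_leaf s && (t == dsh G s)) ||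
  [exists v : 'I_n, exists i : 'I_4, [&& (v < mate G v)%N, s == At v i &
                          t == At (mate G v) (corner_idx (prop G v) i)]] ||
  ((s == Rt true) && (t == Rt false)).

Definition gam : rel (slot n) := fun s t => gam0 s t || gam0 t s.

Definition faces : {set {set slot n}} :=
  [set [set t | connect gam s t] | s : slot n].
Definition F_G : nat := #|faces|.

(* wavy edges, indexed by their smaller vertex *)
Definition wavy : {set 'I_n} := [set v : 'I_n | (v < mate G v)%N].

Definition Eentry (v : 'I_n) (f : {set slot n}) : R :=
  \sum_(i < 4 | At v i \in f) (if (val i < 2)%N then 1 else -1).

Definition Emat : 'M[R]_(#|wavy|, #|faces|) :=
  \matrix_(w < #|wavy|, f < #|faces|) Eentry (enum_val w) (enum_val f).

Definition R_G : nat := \rank Emat.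

Definition degree : int := (n%:Z - F_G%:Z + R_G%:Z + 1)%R.

End Graphs.

(* Momenta are constant along the cycles of Gamma, so an admissible attribution
   is determined by its vector m of face momenta.  This vector satisfies
   m E^T = 0 and has coordinate r on the root face; as the all-ones vector lies
   in the kernel of E but is not orthogonal to the root face, the differences of
   such vectors span a space of dimension k = F - R - 1 = n - d, so an admissible
   attribution is determined by its momenta on k suitable faces.  Moreover
   k <= 3n/2 - 1: such a difference is determined by its values on the slots
   e_1, e_2, e_3 of the smaller ends of the wavy edges, and it vanishes on the
   slot e_1 of the first vertex, which lies on the root face.  Attaching the
   vertices in heap order shows that every momentum is at most 2L and that
   r <= L, where L is the total leaf momentum.  Hence, with q = p^(1/4n), the
   weight p^L = q^(4nL) is at most q^r times the product of the q^(m_i) over the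
   k chosen momenta m_i, and summing k geometric series gives
   A_r(G) <= N^-n p^(r/4n) (1-q)^-k <= N^-n p^(r/4n) (4nN)^k. *)

From HB Require Import structures.
From mathcomp Require Import all_boot all_order all_algebra.
From mathcomp Require Import classical_sets reals constructive_ereal ereal esum exp.
From mathcomp Require Import cardinality fsbigop finmap zify ring lra.
Set Implicit Arguments. Unset Strict Implicit. Unset Printing Implicit Defensive.
Import Order.TTheory GRing.Theory Num.Theory.
Local Open Scope ring_scope.

Section RankLemmas.
Variable F : fieldType.

Lemma rank_col_mx_indep m c (A : 'M[F]_(m, c)) (u : 'rV[F]_c) (x : 'cV[F]_c) :
  A *m x = 0 -> u *m x != 0 -> \rank (col_mx A u) = (\rank A).+1.
Proof.
move=> Ax0 ux0.
have u0 : u != 0 by apply: contraNneq ux0 => ->; rewrite mul0mx.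
have uA : ~~ (u <= A)%MS.
  by apply: contra ux0 => /submxP [z ->]; rewrite -mulmxA Ax0 mulmx0.
have capAu : \rank (A :&: u)%MS = 0%N.
  case/boolP: (u <= A :&: u)%MS => h.
    by case/negP: uA; apply: submx_trans h (capmxSl _ _).
  case: (mxrank_leqif_sup (capmxSr A u)) => le eqi.
  rewrite (negbTE h) rank_rV u0 in eqi le; move/eqP: eqi; lia.
rewrite -(addsmxE A u).1.
by have := mxrank_sum_cap A u; rewrite capAu rank_rV u0 addn0 addn1.
Qed.

Lemma rank_mulmx_inj m c p (W : 'M[F]_(m, c)) (P : 'M[F]_(c, p)) :
  (forall x : 'rV[F]_c, (x <= W)%MS -> x *m P = 0 -> x = 0) ->
  \rank (W *m P) = \rank W.
Proof.
move=> Pinj; have := mxrank_mul_ker W P.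
suff -> : \rank (W :&: kermx P)%MS = 0%N by rewrite addn0.
apply/eqP; rewrite mxrank_eq0 -submx0; apply/row_subP => i.
have yW : (row i (W :&: kermx P) <= W)%MS := submx_trans (row_sub i _) (capmxSl _ _).
have /submx_trans/(_ (capmxSr _ _)) := row_sub i (W :&: kermx P)%MS.
by rewrite sub_kermx => /eqP/(Pinj _ yW) ->; rewrite sub0mx.
Qed.

Lemma determining_coords m c (W : 'M[F]_(m, c)) :
  exists f : 'I_(\rank W) -> 'I_c,
    forall x : 'rV[F]_c, (x <= W)%MS -> (forall i, x 0 (f i) = 0) -> x = 0.
Proof.
rewrite -mxrank_tr; exists (maxrankfun W^T) => x xW xf0.
have rWf : \rank (colsub (maxrankfun W^T) W) = \rank W.
  have := maxrowsub_free W^T; rewrite /row_free -trmx_mxsub mxrank_tr => /eqP ->.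
  exact: mxrank_tr.
have /eqP := mxrank_mul_ker W (colsub (maxrankfun W^T) 1%:M).
rewrite mulmx_colsub mulmx1 rWf -{2}[\rank W]addn0 eqn_add2l mxrank_eq0 => /eqP Wf0.
apply/eqP; rewrite -submx0 -Wf0 sub_capmx xW sub_kermx mulmx_colsub mulmx1.
by apply/eqP/rowP => i; rewrite !mxE xf0.
Qed.
End RankLemmas.

Lemma geometric_sum_le (R : numFieldType) (q : R) (M : nat) : 0 <= q < 1 ->
  \sum_(j < M) q ^+ j <= (1 - q)^-1.
Proof.
case/andP => q0 q1; have q1' : 0 < 1 - q by rewrite subr_gt0.
rewrite -[leRHS]mulr1 ler_pdivlMl // -opprB mulNr -subrX1 opprB.
by rewrite lerBlDr lerDl exprn_ge0.
Qed.

Lemma sum_uniq_le_sum (R : numDomainType) (T : finType) (s : seq T) (h : T -> R) :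
  uniq s -> (forall x, 0 <= h x) -> \sum_(x <- s) h x <= \sum_x h x.
Proof.
move=> s_uniq h_ge0; rewrite big_uniq // [leRHS](bigID (mem s)) /=.
by rewrite lerDl sumr_ge0.
Qed.

Lemma sum_prod_geometric_le (R : realFieldType) (q : R) (k : nat)
    (T : eqType) (s : seq T) (phi : T -> 'I_k -> nat) :
  0 <= q < 1 -> uniq s -> {in s &, forall x y, phi x =1 phi y -> x = y} ->
  \sum_(x <- s) \prod_i q ^+ phi x i <= (1 - q)^-1 ^+ k.
Proof.
move=> q01 s_uniq phi_inj; have q0 : 0 <= q by case/andP: q01.
pose M := (\max_(x <- s) \max_(i < k) phi x i).+1.
have phiM x i : x \in s -> (phi x i < M)%N.
  move=> xs; rewrite ltnS; apply: leq_trans (leq_bigmax_seq _ xs isT).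
  exact: leq_bigmax (fun i => phi x i) i.
pose psi x : {ffun 'I_k -> 'I_M} := [ffun i => inord (phi x i)].
pose h (y : {ffun 'I_k -> 'I_M}) := \prod_i q ^+ y i.
have -> : \sum_(x <- s) \prod_i q ^+ phi x i = \sum_(x <- s) h (psi x).
  rewrite big_seq [RHS]big_seq; apply: eq_bigr => x xs; apply: eq_bigr => i _.
  by rewrite ffunE inordK ?phiM.
rewrite -(big_map psi predT h); apply: le_trans (sum_uniq_le_sum _ _) _.
- rewrite map_inj_in_uniq // => x y xs ys /ffunP psi_xy; apply: phi_inj => // i.
  by have /(congr1 val) := psi_xy i; rewrite !ffunE /= !inordK ?phiM.
- by move=> y; apply: prodr_ge0 => i _; apply: exprn_ge0.
rewrite /h -(bigA_distr_bigA (fun _ (j : 'I_M) => q ^+ j)) -[k in _ ^+ k]card_ord.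
rewrite -prodr_const; apply: ler_prod => i _.
by rewrite sumr_ge0 => [|j _]; [exact: geometric_sum_le | exact: exprn_ge0].
Qed.

Lemma esum_le_geometric (R : realType) (T : choiceType) (D : set T) (k : nat)
    (phi : T -> 'I_k -> nat) (g : T -> R) (q c : R) :
  0 <= q < 1 -> 0 <= c ->
  (forall a b, D a -> D b -> phi a =1 phi b -> a = b) ->
  (forall a, D a -> 0 <= g a <= c * \prod_i q ^+ phi a i) ->
  (esum D (fun a => (g a)%:E) <= (c * (1 - q)^-1 ^+ k)%:E)%E.
Proof.
move=> q01 c0 phi_inj g_le; apply: ge_ereal_sup => _ [X [finX XD] <-].
rewrite fsbig_finite //= sumEFin lee_fin.
have sD x : x \in fset_set X -> D x by rewrite in_fset_set // => /set_mem/XD.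
apply: le_trans (_ : \sum_(x <- fset_set X) c * \prod_i q ^+ phi x i <= _).
  by rewrite big_seq [leRHS]big_seq; apply: ler_sum => x /sD/g_le/andP[].
rewrite -mulr_sumr ler_wpM2l // sum_prod_geometric_le ?fset_uniq //.
by move=> x y /sD Dx /sD Dy; apply: phi_inj.
Qed.

Lemma sum_nat_mkcond_mul (T : finType) (P : pred T) (F : T -> nat) :
  (\sum_(x | P x) F x = \sum_x P x * F x)%N.
Proof. by rewrite big_mkcond; apply: eq_bigr => x _; case: (P x); rewrite ?mul1n. Qed.

Definition vertex_mom (S j k : nat) (i : 'I_4) : nat :=
  match val i with 0 => j | 1 => S - j | 2 => k | _ => S - k end%N.

Lemma prop_ok_corner (c : 'I_8) (S j k j' k' : nat) (i : 'I_4) :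
  (j <= S)%N -> (k <= S)%N -> (j' <= S)%N -> (k' <= S)%N ->
  prop_ok c S j k j' k' -> vertex_mom S j k i = vertex_mom S j' k' (corner_idx c i).
Proof.
move=> jS kS j'S k'S.
case: c => [[|[|[|[|[|[|[|[|c]]]]]]]] c8] //; case: i => [[|[|[|[|i]]]] i4] //;
by rewrite /prop_ok /corner_idx /vertex_mom /= inordK // => /andP[/eqP e1 /eqP e2]; lia.
Qed.

Lemma corner_idx_surj (c : 'I_8) (i : 'I_4) : exists i', corner_idx c i' = i.
Proof.
case: c => [[|[|[|[|[|[|[|[|c]]]]]]]] c8] //; case: i => [[|[|[|[|i]]]] i4] //;
first [ by exists (inord 0); apply: val_inj; rewrite /corner_idx /= !inordK
      | by exists (inord 1); apply: val_inj; rewrite /corner_idx /= !inordK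
      | by exists (inord 2); apply: val_inj; rewrite /corner_idx /= !inordK
      | by exists (inord 3); apply: val_inj; rewrite /corner_idx /= !inordK ].
Qed.

Lemma sum_ord4 (V : nmodType) (F : 'I_4 -> V) :
  \sum_(i < 4) F i = F (inord 0) + F (inord 1) + F (inord 2) + F (inord 3).
Proof.
rewrite !big_ord_recr big_ord0 /= add0r.
by congr (_ + _ + _ + _); congr F; apply: val_inj; rewrite /= inordK.
Qed.

Lemma eq_At (n : nat) (u v : 'I_n) (i j : 'I_4) :
  (At u i == At v j) = (u == v :> nat) && (i == j).
Proof. by apply/eqP/andP => [[-> ->]|[/eqP/val_inj -> /eqP ->]]. Qed.

Section WellFormed.
Variables (n : nat) (G : graph n).
Hypothesis wf : graph_wf G.

Lemma par_hang (v : 'I_n) : hang_slot (par G v).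
Proof. by case: wf. Qed.
Lemma par_lt (v u : 'I_n) (i : 'I_4) : par G v = At u i -> (u < v)%N.
Proof. by case: wf => _ [+ _]; apply. Qed.
Lemma par_inj : injective (par G).
Proof. by case: wf => _ [_ [+ _]]. Qed.
Lemma dsh_antileaf s : is_leaf G s -> is_antileaf G (dsh G s).
Proof. by case: wf => _ [_ [_ [_ [+ _]]]]; apply. Qed.
Lemma dsh_inj s s' : is_leaf G s -> is_leaf G s' -> dsh G s = dsh G s' -> s = s'.
Proof. by case: wf => _ [_ [_ [_ [_ [+ _]]]]]; apply. Qed.
Lemma dsh_onto t : is_antileaf G t -> exists2 s, is_leaf G s & dsh G s = t.
Proof. by case: wf => _ [_ [_ [_ [_ [_ [+ _]]]]]]; apply. Qed.
Lemma mate_neq (v : 'I_n) : mate G v != v.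
Proof. by case: wf => _ [_ [_ [_ [_ [_ [_ [+ _]]]]]]]; apply. Qed.
Lemma mateK : involutive (mate G).
Proof. by case: wf => _ [_ [_ [_ [_ [_ [_ [_ +]]]]]]]. Qed.

Lemma wavyNmate (v : 'I_n) : (v \notin wavy G) = (mate G v \in wavy G).
Proof.
have mate_neq_nat : (mate G v != v :> nat) := mate_neq v.
by rewrite !inE mateK -leqNgt ltn_neqAle mate_neq_nat.
Qed.

Lemma card_wavy : (#|wavy G| * 2)%N = n.
Proof.
have wavyC : ~: wavy G = mate G @: wavy G.
  apply/setP => v; rewrite inE wavyNmate -[in RHS](mateK v).
  by rewrite mem_imset //; apply: can_inj mateK.
have := cardsC (wavy G); rewrite wavyC card_imset; last exact: can_inj mateK.
by rewrite card_ord muln2 -addnn.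
Qed.

End WellFormed.

Section Momenta.
Variables (n : nat) (G : graph n) (r : nat) (a : attribution n).
Hypothesis adm : admissible G r a.

Lemma mom_At (v : 'I_n) (i : 'I_4) : mom r a (At v i) = vertex_mom (aS a v) (aj a v) (ak a v) i.
Proof. by []. Qed.

Lemma admissible_le (v : 'I_n) : (aj a v <= aS a v)%N /\ (ak a v <= aS a v)%N.
Proof. by case: adm => + _; apply. Qed.

Lemma mom_At_le (v : 'I_n) (i : 'I_4) : (mom r a (At v i) <= aS a v)%N.
Proof.
have [jS kS] := admissible_le v.
by rewrite mom_At /vertex_mom; case: i => [[|[|[|[|i]]]] i4] /=; lia.
Qed.

Lemma mom_corner (v : 'I_n) (i : 'I_4) : (v < mate G v)%N ->
  mom r a (At v i) = mom r a (At (mate G v) (corner_idx (prop G v) i)).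
Proof.
move=> v_lt; have [vS ok_corner] := adm.2.2.2 v v_lt.
have [jS kS] := admissible_le v; have [j'S k'S] := admissible_le (mate G v).
by rewrite !mom_At -vS; apply: prop_ok_corner => //; rewrite vS.
Qed.

Lemma mom_gam s t : gam G s t -> mom r a s = mom r a t.
Proof.
have [_ [solid [dashed _]]] := adm.
suff mom_gam0 x y : gam0 G x y -> mom r a x = mom r a y.
  by case/orP => /mom_gam0.
case/orP => [/orP[/orP[|]|]|].
- by case/existsP => v /andP[/eqP -> /eqP ->]; apply: solid.
- by case/andP => x_leaf /eqP ->; apply: dashed.
- case/existsP => v /existsP[i /and3P[v_lt /eqP -> /eqP ->]].
  exact: mom_corner.
- by case/andP => /eqP -> /eqP ->.
Qed.

Lemma mom_connect s t : connect (gam G) s t -> mom r a s = mom r a t.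
Proof.
case/connectP => p; elim: p s => [|x p IHp] s /=; first by move=> _ ->.
by case/andP => /mom_gam -> p_path t_last; apply: IHp.
Qed.

End Momenta.

Lemma admissible_mom_inj (n : nat) (G : graph n) (r : nat) (a b : attribution n) :
  admissible G r a -> admissible G r b -> mom r a =1 mom r b -> a = b.
Proof.
move=> adm_a adm_b ab; apply/ffunP => v.
have := ab (At v (inord 0)); have := ab (At v (inord 1)); have := ab (At v (inord 2)).
have := admissible_le adm_a v; have := admissible_le adm_b v.
rewrite !mom_At /vertex_mom /= !inordK //= /aS /aj /ak.
by case: (a v) (b v) => [[S j] k] [[S' j'] k'] /= *; congr (_, _, _); lia.
Qed.

Section Gamma.
Variables (n : nat) (G : graph n).

Lemma gam_solid (v : 'I_n) : gam G (At v ord0) (par G v).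
Proof.
apply/orP; left; apply/orP; left; apply/orP; left; apply/orP; left.
by apply/existsP; exists v; rewrite !eqxx.
Qed.

Lemma gam_corner (v : 'I_n) : (v < mate G v)%N -> forall i : 'I_4,
  gam G (At v i) (At (mate G v) (corner_idx (prop G v) i)).
Proof.
move=> v_lt i; apply/orP; left; apply/orP; left; apply/orP; right.
by apply/existsP; exists v; apply/existsP; exists i; rewrite v_lt !eqxx.
Qed.

Lemma gam_root : gam G (Rt true) (Rt false).
Proof. by apply/orP; left; apply/orP; right; rewrite !eqxx. Qed.

Lemma connect_gam_sym : connect_sym (gam G).
Proof. by apply: sym_connect_sym => s t; rewrite /gam orbC. Qed.

End Gamma.

Section Faces.
Variables (n : nat) (G : graph n).

Definition face (s : slot n) : {set slot n} := [set t | connect (gam G) s t].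

Lemma face_in_faces s : face s \in faces G.
Proof. exact: imset_f. Qed.

Lemma eq_face s t : (face s == face t) = connect (gam G) s t.
Proof.
apply/eqP/idP => [st|].
  have : t \in face t by rewrite inE connect0.
  by rewrite -st inE.
rewrite connect_gam_sym => ts; apply/setP => x.
by rewrite !inE (same_connect (@connect_gam_sym _ G) ts).
Qed.

Definition face_id (s : slot n) : 'I_#|faces G| :=
  enum_rank_in (face_in_faces s) (face s).

Lemma face_idK s : enum_val (face_id s) = face s.
Proof. by rewrite enum_rankK_in // face_in_faces. Qed.

Lemma face_id_surj (f : 'I_#|faces G|) : exists s, f = face_id s.
Proof.
have /imsetP[s _ fs] := enum_valP f; exists s.
by apply: enum_val_inj; rewrite face_idK.
Qed.

Lemma eq_face_id s t : (face_id s == face_id t) = connect (gam G) s t.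
Proof. by rewrite -eq_face -!face_idK (inj_eq enum_val_inj). Qed.

Lemma in_enum_face (f : 'I_#|faces G|) s : (s \in enum_val f) = (f == face_id s).
Proof. by have [t ->] := face_id_surj f; rewrite face_idK inE eq_face_id. Qed.

Definition face_rep (f : 'I_#|faces G|) : slot n := odflt (Rt true) [pick s in enum_val f].

Lemma connect_face_rep s : connect (gam G) s (face_rep (face_id s)).
Proof.
rewrite /face_rep; case: pickP => [t|/(_ s)] /=; rewrite face_idK inE //.
by rewrite connect0.
Qed.

End Faces.

Section FaceMomenta.
Variables (n : nat) (G : graph n) (R : realType).

Definition corner_sign (i : 'I_4) : R := if (val i < 2)%N then 1 else -1.

Lemma mul_trEmat (x : 'rV[R]_#|faces G|) (w : 'I_#|wavy G|) :
  (x *m (Emat G R)^T) 0 w =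
  \sum_(i < 4) corner_sign i * x 0 (face_id G (At (enum_val w) i)).
Proof.
rewrite !mxE; under eq_bigr => f _ do rewrite !mxE /Eentry big_distrr big_mkcond /=.
rewrite exchange_big /=; apply: eq_bigr => i _.
rewrite (bigD1 (face_id G (At (enum_val w) i))) //= big1 ?addr0.
  by rewrite in_enum_face eqxx mulrC.
by move=> f /negbTE f_neq; rewrite in_enum_face f_neq.
Qed.

Definition face_mom (r : nat) (a : attribution n) : 'rV[R]_#|faces G| :=
  \row_f (mom r a (face_rep f))%:R.

Lemma face_momE r a s : admissible G r a ->
  face_mom r a 0 (face_id G s) = (mom r a s)%:R.
Proof. by move=> adm; rewrite mxE -(mom_connect adm (connect_face_rep G s)). Qed.

Lemma face_mom_Emat r a : admissible G r a -> face_mom r a *m (Emat G R)^T = 0.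
Proof.
move=> adm; apply/rowP => w; rewrite mul_trEmat mxE sum_ord4.
have [jS kS] := admissible_le adm (enum_val w).
rewrite !face_momE // !mom_At /vertex_mom /corner_sign /= !inordK //= !natrB //; lra.
Qed.

Lemma face_mom_inj r a b : admissible G r a -> admissible G r b ->
  face_mom r a = face_mom r b -> a = b.
Proof.
move=> adm_a adm_b ab; apply: (admissible_mom_inj adm_a adm_b) => s.
by apply/eqP; rewrite -(eqr_nat R) -(face_momE s adm_a) -(face_momE s adm_b) ab.
Qed.

Definition root_face : 'I_#|faces G| := face_id G (Rt true).

Definition constraint_mx : 'M[R]_(#|faces G|, #|wavy G| + 1) :=
  row_mx (Emat G R)^T (delta_mx root_face 0).

Definition homog_space : 'M[R]_#|faces G| := kermx constraint_mx.

Lemma homog_spaceP (x : 'rV[R]_#|faces G|) :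
  (x <= homog_space)%MS = (x *m (Emat G R)^T == 0) && (x 0 root_face == 0).
Proof.
rewrite sub_kermx mul_mx_row row_mx_eq0 -colE; congr (_ && _).
apply/eqP/eqP => [/rowP/(_ 0)|x0]; first by rewrite !mxE.
by apply/rowP => i; rewrite !mxE.
Qed.

Lemma face_mom_sub_homog r a b : admissible G r a -> admissible G r b ->
  (face_mom r a - face_mom r b <= homog_space)%MS.
Proof.
move=> adm_a adm_b; rewrite homog_spaceP mulmxBl !face_mom_Emat // subrr eqxx /=.
by rewrite mxE [(- _ : 'M_(1, _)) 0 _]mxE !face_momE // subrr.
Qed.

Lemma Emat_ones : Emat G R *m (const_mx 1 : 'cV_#|faces G|) = 0.
Proof.
apply: trmx_inj; rewrite trmx_mul trmx0; apply/rowP => w.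
by rewrite mul_trEmat mxE sum_ord4 !mxE /corner_sign /= !inordK //=; lra.
Qed.

Lemma rank_constraint_mx : \rank constraint_mx = (R_G G R).+1.
Proof.
rewrite -mxrank_tr tr_row_mx trmxK trmx_delta.
apply: (rank_col_mx_indep (x := const_mx 1)); first exact: Emat_ones.
apply/negP => /eqP /matrixP /(_ 0 0).
rewrite !mxE (bigD1 root_face) //= big1 ?addr0 => [|f f_neq].
  by rewrite !mxE !eqxx mulr1 => /eqP; rewrite oner_eq0.
by rewrite !mxE (negbTE f_neq) andbF mul0r.
Qed.

Lemma rank_homog_space : \rank homog_space = (#|faces G| - (R_G G R).+1)%N.
Proof. by rewrite mxrank_ker rank_constraint_mx. Qed.

End FaceMomenta.

Section RankBound.
Variables (n : nat) (G : graph n) (R : realType).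
Hypothesis wf : graph_wf G.

Lemma face_id_Rt b : face_id G (Rt b) = root_face G.
Proof.
apply/eqP; rewrite eq_face_id; case: b; first exact: connect0.
by rewrite connect_gam_sym; apply/connect1/gam_root.
Qed.

Lemma face_id_wavy (u : 'I_n) (i : 'I_4) :
  exists2 v, v \in wavy G & exists i', face_id G (At u i) = face_id G (At v i').
Proof.
have [u_wavy|] := boolP (u \in wavy G); first by exists u => //; exists i.
rewrite wavyNmate // => mate_wavy; exists (mate G u) => //.
have [i' <-] := corner_idx_surj (prop G (mate G u)) i; exists i'.
apply/eqP; rewrite eq_face_id connect_gam_sym; apply: connect1.
by move: mate_wavy; rewrite inE => /gam_corner/(_ i'); rewrite mateK.
Qed.

Definition slot_face (i : 'I_4) (w : 'I_#|wavy G|) : 'I_#|faces G| :=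
  face_id G (At (enum_val w) i).

Definition slots_mx : 'M[R]_(#|faces G|, #|wavy G| + #|wavy G| + #|wavy G|) :=
  row_mx (row_mx (colsub (slot_face (inord 0)) 1%:M) (colsub (slot_face (inord 1)) 1%:M))
         (colsub (slot_face (inord 2)) 1%:M).

(* Vanishing at the slots e_1, e_2, e_3 of the smaller ends of the wavy edges
   forces vanishing at their slots e_4 (row of E) and at the larger ends
   (corners). *)
Lemma homog_slots_inj (x : 'rV[R]_#|faces G|) :
  (x <= homog_space G R)%MS -> x *m slots_mx = 0 -> x = 0.
Proof.
rewrite homog_spaceP => /andP[/eqP xE /eqP x_root].
rewrite !mul_mx_row !mulmx_colsub !mulmx1 -!row_mx0 => /eq_row_mx[/eq_row_mx[x0 x1] x2].
have x_wavy v : v \in wavy G -> forall i, x 0 (face_id G (At v i)) = 0.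
  move=> v_wavy; have vK : enum_val (enum_rank_in v_wavy v) = v by rewrite enum_rankK_in.
  have slot012 (i : 'I_4) (xi : colsub (slot_face i) x = 0) : x 0 (face_id G (At v i)) = 0.
    by have /rowP/(_ (enum_rank_in v_wavy v)) := xi; rewrite !mxE /slot_face vK.
  have slot3 : x 0 (face_id G (At v (inord 3))) = 0.
    move/rowP/(_ (enum_rank_in v_wavy v)): xE; rewrite mul_trEmat mxE sum_ord4 vK.
    rewrite (slot012 _ x0) (slot012 _ x1) (slot012 _ x2) /corner_sign /= !inordK //=.
    by rewrite !mulr0 !add0r mulN1r => /eqP; rewrite oppr_eq0 => /eqP.
  by move=> i; rewrite -(inord_val i); case: i => [[|[|[|[|i]]]] i4] //; exact: slot012.
apply/rowP => f; have [s ->] := face_id_surj f; rewrite mxE.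
case: s => [b|[u i]]; first by rewrite face_id_Rt.
by have [v v_wavy [i' ->]] := face_id_wavy u i; apply: x_wavy.
Qed.

Hypothesis n_gt0 : (0 < n)%N.

Let v0 : 'I_n := Ordinal n_gt0.

Lemma face_id_first : face_id G (At v0 (inord 0)) = root_face G.
Proof.
have [b par_v0] : exists b, par G v0 = Rt b.
  by case e: (par G v0) => [b|[u i]]; [exists b | have := par_lt wf e].
rewrite -(face_id_Rt b) -par_v0; apply/eqP; rewrite eq_face_id.
have -> : inord 0 = ord0 :> 'I_4 by apply: val_inj; rewrite /= inordK.
exact/connect1/gam_solid.
Qed.

Lemma first_wavy : v0 \in wavy G.
Proof. by rewrite inE lt0n; have := mate_neq wf v0; rewrite -val_eqE. Qed.

Lemma rank_homog_space_lt : ((\rank (homog_space G R)).+1 <= 3 * #|wavy G|)%N.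
Proof.
set w := #|wavy G|; set W := homog_space G R.
pose c0 : 'I_(w + w + w) := lshift w (lshift w (enum_rank_in first_wavy v0)).
have slots_c0 (y : 'rV_#|faces G|) : (y *m slots_mx) 0 c0 = y 0 (root_face G).
  rewrite !mul_mx_row !mulmx_colsub !mulmx1 !row_mxEl mxE /slot_face.
  by rewrite enum_rankK_in ?first_wavy // face_id_first.
rewrite -(rank_mulmx_inj homog_slots_inj).
rewrite -(rank_col_mx_indep (u := delta_mx 0 c0) (x := delta_mx c0 0)).
- by apply: leq_trans (rank_leq_col _) _; lia.
- apply/row_matrixP => i; rewrite row0 2!row_mul -colE; apply/rowP => j.
  have := row_sub i W; rewrite homog_spaceP => /andP[_ /eqP Wi_root].
  by rewrite mxE ord1 slots_c0 Wi_root mxE.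
- by rewrite mul_delta_mx; apply/eqP/matrixP => /(_ 0 0); rewrite !mxE !eqxx; apply/eqP/oner_neq0.
Qed.

End RankBound.

Section Frontier.
Variables (n : nat) (G : graph n).
Hypothesis wf : graph_wf G.
Variables (r : nat) (a : attribution n).
Hypothesis adm : admissible G r a.
Local Open Scope nat_scope.

(* [frontier t] is the set of slots left free once the vertices of label < t
   are attached.  Its momentum is 2r at t = 0, and attaching vertex t trades the
   momentum j of its parent slot for (S - j) + k + (S - k) >= j; at t = n the
   frontier consists of the leaves and anti-leaves. *)
Definition born_before (s : slot n) (t : nat) : bool :=
  if s is inr (u, _) then u < t else true.
Definition unoccupied (t : nat) (s : slot n) : bool :=
  [forall w : 'I_n, (w < t) ==> (par G w != s)].
Definition frontier (t : nat) : pred (slot n) :=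
  fun s => [&& hang_slot s, born_before s t & unoccupied t s].
Definition frontier_mom (t : nat) : nat := \sum_(s | frontier t s) mom r a s.
Definition leaf_mom : nat := \sum_(s | is_leaf G s) mom r a s.

Lemma unoccupiedS (t : 'I_n) s : unoccupied t.+1 s = unoccupied t s && (par G t != s).
Proof.
apply/forallP/andP => [free_s|[/forallP free_s par_t] w].
  split; last by have := free_s t; rewrite ltnSn.
  by apply/forallP => w; apply/implyP => w_lt; have := free_s w; rewrite ltnS ltnW.
apply/implyP; rewrite ltnS leq_eqVlt => /orP[/eqP/val_inj -> //|w_lt].
by have := free_s w; rewrite w_lt.
Qed.

Lemma born_before_par (t : 'I_n) : born_before (par G t) t.
Proof. by case e: (par G t) => [b|[u i]] //=; apply: (par_lt wf e). Qed.

Lemma frontier_par (t : 'I_n) : frontier t (par G t).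
Proof.
rewrite /frontier par_hang // born_before_par /=.
apply/forallP => w; apply/implyP => w_lt; apply: contraTneq w_lt => /(par_inj wf) ->.
by rewrite ltnn.
Qed.

Lemma unoccupied_child (t : 'I_n) t' i : t' <= t.+1 -> unoccupied t' (At t i).
Proof.
move=> t'_le; apply/forallP => w; apply/implyP => w_lt; apply/eqP => /(par_lt wf).
by rewrite ltnNge -ltnS (leq_trans w_lt t'_le).
Qed.

Lemma frontier_step (t : 'I_n) s :
  frontier t.+1 s + (s == par G t) =
  frontier t s + ((s == At t (inord 1)) + (s == At t (inord 2)) + (s == At t (inord 3))).
Proof.
have [<-|par_s] := eqVneq (par G t) s.
  rewrite frontier_par /frontier unoccupiedS eqxx !andbF /=.
  have := born_before_par t; case: (par G t) => [b|[u i]] //= u_lt.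
  by rewrite !eq_At ltn_eqF.
rewrite /frontier unoccupiedS par_s andbT addn0.
case: s par_s => [b _|[u i] _]; first by rewrite /= !addn0.
rewrite -[inr (u, i)]/(At u i) !eq_At /=; case: (ltngtP u t) => [u_lt|u_gt|/val_inj u_t].
- by rewrite ltnS ltnW ?addn0.
- by rewrite ltnS leqNgt u_gt /= !andbF.
rewrite u_t ltnSn (unoccupied_child _ (leqnSn t)) /= !andbT.
have inordE k (k4 : k < 4) : inord k = Ordinal k4 by apply: val_inj; rewrite /= inordK.
by rewrite (inordE 1 isT) (inordE 2 isT) (inordE 3 isT); case: i => [[|[|[|[|i]]]] i4].
Qed.

Lemma frontier_mom_step (t : 'I_n) :
  frontier_mom t.+1 + mom r a (par G t) =
  frontier_mom t + (mom r a (At t (inord 1)) + mom r a (At t (inord 2)) + mom r a (At t (inord 3))).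
Proof.
have sum1 x : mom r a x = \sum_s (s == x) * mom r a s.
  by rewrite (bigD1 x) //= eqxx mul1n big1 ?addn0 // => s /negbTE ->.
rewrite /frontier_mom (sum_nat_mkcond_mul (frontier t.+1)) (sum_nat_mkcond_mul (frontier t)).
rewrite !(sum1 (par G t)) !(sum1 (At _ _)) -!big_split.
by apply: eq_bigr => s _ /=; rewrite -!mulnDl frontier_step.
Qed.

Lemma frontier_mom_le t : t <= n -> frontier_mom t <= frontier_mom n.
Proof.
move=> t_le; apply: (@homo_leq_in _ [pred i | i <= n] frontier_mom leq); rewrite ?inE //.
- exact: leq_trans.
- move=> i j _; rewrite !inE => j_le k /andP[_ /ltnW k_le].
  exact: leq_trans k_le j_le.
move=> i _; rewrite inE => i_lt; have := frontier_mom_step (Ordinal i_lt).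
have [jS kS] := admissible_le adm (Ordinal i_lt); rewrite -adm.2.1 !mom_At.
by rewrite /vertex_mom /= !inordK //=; lia.
Qed.

Lemma frontier_mom_n : frontier_mom n = 2 * leaf_mom.
Proof.
have -> : frontier_mom n = \sum_(s | is_halfedge G s) mom r a s.
  apply: eq_bigl => s; rewrite /frontier /is_halfedge.
  have -> : born_before s n by case: s => [b|[u i]] //=.
  congr (_ && _); apply: eq_forallb => w; by rewrite ltn_ord.
rewrite (bigID (slot_type G)) /= mul2n -addnn; congr (_ + _).
have antileaves : [set t | is_antileaf G t] = dsh G @: [set s | is_leaf G s].
  apply/setP => t; rewrite inE; apply/idP/imsetP => [/(dsh_onto wf)[s s_leaf <-]|[s]].
    by exists s; rewrite ?inE.
  by rewrite inE => /(dsh_antileaf wf) ? ->.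
have -> : \sum_(s | is_halfedge G s && ~~ slot_type G s) mom r a s =
          \sum_(t in [set t | is_antileaf G t]) mom r a t.
  by apply: eq_bigl => t; rewrite inE.
rewrite antileaves big_imset /=; last by move=> x y; rewrite !inE; apply: (dsh_inj wf).
by apply: eq_big => [s|s]; rewrite inE // => /adm.2.2.1 <-.
Qed.

Lemma sum_mom2_le (P : pred (slot n)) x y : x != y -> P x -> P y ->
  mom r a x + mom r a y <= \sum_(s | P s) mom r a s.
Proof.
move=> xy Px Py; rewrite (bigD1 x) //= (bigD1 y) /=; last by rewrite Py eq_sym xy.
by rewrite addnA leq_addr.
Qed.

Lemma r_le_leaf_mom : r <= leaf_mom.
Proof.
rewrite -(leq_pmul2l (isT : 0 < 2)) -frontier_mom_n mul2n -addnn.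
apply: leq_trans (frontier_mom_le (leq0n n)).
by apply: (@sum_mom2_le _ (Rt true) (Rt false)) => //; apply/and3P; split => //; apply/forallP.
Qed.

Lemma aS_le_leaf_mom v : aS a v <= 2 * leaf_mom.
Proof.
rewrite -frontier_mom_n; apply: leq_trans (frontier_mom_le (ltn_ord v)).
have -> : aS a v = mom r a (At v (inord 2)) + mom r a (At v (inord 3)).
  by have [_ kS] := admissible_le adm v; rewrite !mom_At /vertex_mom /= !inordK //=; lia.
apply: sum_mom2_le; first by rewrite eq_At eqxx /= -val_eqE /= !inordK.
all: by apply/and3P; split; rewrite /= ?inordK ?ltnSn ?unoccupied_child.
Qed.

Lemma mom_le_leaf_mom s : mom r a s <= 2 * leaf_mom.
Proof.
case: s => [b|[v i]]; first by have := r_le_leaf_mom; rewrite /=; lia.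
exact: leq_trans (mom_At_le adm v i) (aS_le_leaf_mom v).
Qed.

Lemma weight_exponent_le (k m : nat) (s : 'I_k -> slot n) : 1 + 2 * k <= m ->
  r + \sum_(i < k) mom r a (s i) <= m * leaf_mom.
Proof.
move=> km; have sum_le : \sum_(i < k) mom r a (s i) <= k * (2 * leaf_mom).
  rewrite -[k in k * _]card_ord -sum_nat_const.
  by apply: leq_sum => i _; apply: mom_le_leaf_mom.
apply: leq_trans _ (leq_mul km (leqnn leaf_mom)); rewrite mulnDl mul1n -mulnA mulnCA.
exact: leq_add r_le_leaf_mom sum_le.
Qed.

End Frontier.

Lemma root_powR_expr (R : realType) (p : R) (m : nat) : 0 <= p -> (0 < m)%N ->
  (p `^ m%:R^-1) ^+ m = p.
Proof.
move=> p0 m0; rewrite -powR_mulrn ?powR_ge0 // -powRrM mulVf ?powRr1 //.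
by rewrite pnatr_eq0 -lt0n.
Qed.

Lemma inv_one_sub_le (R : realFieldType) (q : R) (m : nat) : 0 <= q < 1 -> (0 < m)%N ->
  (1 - q)^-1 <= m%:R / (1 - q ^+ m).
Proof.
move=> /andP[q0 q1] m0; have q1' : 0 < 1 - q by rewrite subr_gt0.
have qm1 : 0 < 1 - q ^+ m by rewrite subr_gt0 expr_lt1.
rewrite ler_pdivlMr // mulrC ler_pdivrMr //.
have -> : 1 - q ^+ m = (1 - q) * \sum_(i < m) q ^+ i by rewrite -opprB subrX1 -mulNr opprB.
rewrite mulrC; apply: ler_wpM2r; first exact: ltW.
have -> : m%:R = \sum_(i < m) (1 : R) by rewrite sumr_const card_ord.
by apply: ler_sum => i _; apply: exprn_ile1 => //; apply: ltW.
Qed.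

Section Amplitude.
Variables (R : realType) (n r : nat) (G : graph n).
Hypothesis wf : graph_wf G.
Let k := \rank (homog_space G R).

Lemma esum_weight_le (p q : R) :
  0 <= q < 1 -> q ^+ (4 * n)%N = p -> (1 + 2 * k <= 4 * n)%N ->
  (esum [set a : attribution n | admissible G r a]
     (fun a => (\prod_(s | is_leaf G s) p ^+ mom r a s)%:E)
   <= (q ^+ r * (1 - q)^-1 ^+ k)%:E)%E.
Proof.
move=> q01 qp k_le; have [q0 q1] := andP q01.
have [f f_det] := determining_coords (homog_space G R).
apply: (esum_le_geometric (phi := fun a i => mom r a (face_rep (f i)))) => //.
- exact: exprn_ge0.
- move=> a b adm_a adm_b ab; apply: (face_mom_inj (R := R) adm_a adm_b); apply/eqP.
  rewrite -subr_eq0; apply/eqP/f_det; first exact: face_mom_sub_homog.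
  by move=> i; rewrite !mxE ab subrr.
- move=> a adm; rewrite prodr_ge0 => [|s _]; last by rewrite -qp !exprn_ge0.
  rewrite -qp prodrXr -exprM prodrXr -exprD; apply: ler_wiXn2l => //; first exact: ltW.
  apply: leq_trans (weight_exponent_le wf adm (fun i => face_rep (f i)) k_le) _.
  by rewrite mulnC.
Qed.

Lemma amplitude_le (p : R) : 0 < p < 1 -> (1 + 2 * k <= 4 * n)%N ->
  (amplitude G p r <=
     (Nof p ^- n * powR p (r%:R / (4 * n)%N%:R) * ((4 * n)%N%:R * Nof p) ^+ k)%:E)%E.
Proof.
move=> /andP[p0 p1] k_le; set m := (4 * n)%N; pose q := p `^ m%:R^-1.
have m0 : (0 < m)%N by apply: leq_trans k_le.
have qp : q ^+ m = p by apply: root_powR_expr; rewrite ?ltW.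
have q0 : 0 <= q by apply: powR_ge0.
have q1 : q < 1 by rewrite -(expr_lt1 m0 q0) qp.
have q01 : 0 <= q < 1 by rewrite q0 q1.
have N_gt0 : 0 < Nof p by rewrite invr_gt0 subr_gt0.
rewrite /amplitude; apply: le_trans (lee_wpmul2l _ (esum_weight_le q01 qp k_le)) _.
  by rewrite lee_fin invr_ge0 exprn_ge0 ?ltW.
rewrite -EFinM lee_fin -[leRHS]mulrA ler_pM2l ?invr_gt0 ?exprn_gt0 //.
have -> : q ^+ r = p `^ (r%:R / m%:R) by rewrite -powR_mulrn ?powR_ge0 // -powRrM mulrC.
rewrite ler_pM2l ?powR_gt0 //; apply: lerXn2r.
- by rewrite nnegrE invr_ge0 subr_ge0 ltW.
- by rewrite nnegrE mulr_ge0 // ltW.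
by rewrite -qp; apply: inv_one_sub_le.
Qed.

Lemma degree_homog : degree G R = n%:Z - k%:Z.
Proof.
have RF : ((R_G G R).+1 <= #|faces G|)%N.
  by rewrite -(rank_constraint_mx G R); apply: rank_leq_row.
by rewrite /k rank_homog_space /degree /F_G; lia.
Qed.

End Amplitude.

Unset Implicit Arguments.

Theorem proposition2 (R : realType) (n r : nat) (p : R) (G : graph n) :
  (2 <= n)%N -> ~~ odd n -> 0 < p < 1 -> graph_wf G ->
  (amplitude G p r <=
     (((4 * n)%:R ^+ (3 * n./2 - 1)) * powR p (r%:R / (4 * n)%:R)
       * Nof p ^ (- degree G R))%:E)%E.
Proof.
move=> n_ge2 _ p01 wf; have p1 : p < 1 by case/andP: p01.
have n_gt0 : (0 < n)%N by apply: leq_trans n_ge2.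
have n_wavy := card_wavy wf; have k_lt := rank_homog_space_lt R wf n_gt0.
set k := \rank (homog_space G R) in k_lt.
apply: le_trans (amplitude_le r wf p01 _) _; first by lia.
rewrite lee_fin degree_homog opprB expfzDr ?gt_eqF ?invr_gt0 ?subr_gt0 // -exprnN -exprnP.
(* In the statement, [4 * n] is the ring product of [nat]. *)
have -> : (4 * n)%:R = (4 * n)%N%:R :> R by [].
set M := (4 * n)%N%:R; set P := p `^ _; set N := Nof p; rewrite -/k.
have N_gt0 : 0 < N by rewrite invr_gt0 subr_gt0.
(* Without [clearbody], [ring] would try to compute the rank [k]. *)
rewrite exprMn [leLHS](_ : _ = M ^+ k * (P * (N ^+ k / N ^+ n))); last first.
  by clearbody M P N k; ring.
rewrite -[leRHS]mulrA; apply: ler_wpM2r.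
  by rewrite mulr_ge0 ?powR_ge0 // divr_ge0 // exprn_ge0 // ltW.
have -> : n./2 = #|wavy G| by rewrite -[in LHS]n_wavy muln2 doubleK.
by rewrite ler_eXn2l ?ltr1n; clearbody k; lia.
Qed.
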